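(* Let $\Gamma$ be a finite multiset of formulas and $A$ a formula of propositional logic. If the sequent $\Gamma \Rightarrow A$ is derivable in classical propositional logic (i.e. $\Gamma \vdash_c A$), then $\Pi_V, \Gamma \vdash_i A$ (i.e. $A$ is derivable in intuitionistic propositional logic from the assumptions $\Pi_V \cup \Gamma$), where \[ V = (\mathcal{V}^-(\Gamma) \cup \mathcal{V}^+(A)) \cap (\mathcal{V}^+_{ns}(\Gamma) \cup \mathcal{V}^-(A)). \]
   Context: Formulas are built from propositional variables and $\bot$ using $\land$, $\lor$, $\to$; $\lnot A$ abbreviates $A \to \bot$. For a set $V$ of propositional variables, $\Pi_V = \{ p \lor \lnot p \mid p \in V\}$. $\vdash_c$ and $\vdash_i$ denote derivability in classical and intuitionistic propositional logic respectively (e.g. in the cut-free sequent calculi G3cp and G3ip). The sets $\mathcal{V}^+(A)$, $\mathcal{V}^-(A)$ of variables occurring positively, negatively in $A$ are defined simultaneously by: $\mathcal{V}^+(p)=\{p\}$, $\mathcal{V}^+(\bot)=\emptyset$, $\mathcal{V}^+(A\land B)=\mathcal{V}^+(A\lor B)=\mathcal{V}^+(A)\cup\mathcal{V}^+(B)$, $\mathcal{V}^+(A\to B)=\mathcal{V}^-(A)\cup\mathcal{V}^+(B)$; $\mathcal{V}^-(p)=\mathcal{V}^-(\bot)=\emptyset$, $\mathcal{V}^-(A\land B)=\mathcal{V}^-(A\lor B)=\mathcal{V}^-(A)\cup\mathcal{V}^-(B)$, $\mathcal{V}^-(A\to B)=\mathcal{V}^+(A)\cup\mathcal{V}^-(B)$.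 The set $\mathcal{V}^+_{ns}(A)$ of variables occurring non-strictly positively is defined by $\mathcal{V}^+_{ns}(p)=\mathcal{V}^+_{ns}(\bot)=\emptyset$, $\mathcal{V}^+_{ns}(A\land B)=\mathcal{V}^+_{ns}(A\lor B)=\mathcal{V}^+_{ns}(A)\cup\mathcal{V}^+_{ns}(B)$, $\mathcal{V}^+_{ns}(A\to B)=\mathcal{V}^-(A)\cup\mathcal{V}^+_{ns}(B)$. For a finite multiset $\Gamma$, $\mathcal{V}^+(\Gamma)=\bigcup_{A\in\Gamma}\mathcal{V}^+(A)$, and similarly for $\mathcal{V}^-$ and $\mathcal{V}^+_{ns}$. *)

From Stdlib Require Import List Permutation.
Import ListNotations.

Inductive form : Type :=
| Var : nat -> form
| Bot : form
| And : form -> form -> form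
| Or  : form -> form -> form
| Imp : form -> form -> form.

Definition Neg (A : form) : form := Imp A Bot.

Fixpoint vp (b : bool) (A : form) : list nat :=
  match A with
  | Var p => if b then [p] else []
  | Bot => []
  | And B C => vp b B ++ vp b C
  | Or B C => vp b B ++ vp b C
  | Imp B C => vp (negb b) B ++ vp b C
  end.

Definition Vpos (A : form) : list nat := vp true A.
Definition Vneg (A : form) : list nat := vp false A.

Fixpoint Vns (A : form) : list nat :=
  match A with
  | Var _ => []
  | Bot => []
  | And B C => Vns B ++ Vns C
  | Or B C => Vns B ++ Vns C
  | Imp B C => Vneg B ++ Vns C
  end.

Definition VposL (G : list form) : list nat := flat_map Vpos G.
Definition VnegL (G : list form) : list nat := flat_map Vneg G.
Definition VnsL  (G : list form) : list nat := flat_map Vns G.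

(* G3cp: sequents Gamma => Delta with multisets represented as lists
   up to permutation (exchange rule). *)
Inductive G3cp : list form -> list form -> Prop :=
| G3c_ax : forall p G D, G3cp (Var p :: G) (Var p :: D)
| G3c_botL : forall G D, G3cp (Bot :: G) D
| G3c_andL : forall A B G D, G3cp (A :: B :: G) D -> G3cp (And A B :: G) D
| G3c_andR : forall A B G D, G3cp G (A :: D) -> G3cp G (B :: D) ->
    G3cp G (And A B :: D)
| G3c_orL : forall A B G D, G3cp (A :: G) D -> G3cp (B :: G) D ->
    G3cp (Or A B :: G) D
| G3c_orR : forall A B G D, G3cp G (A :: B :: D) -> G3cp G (Or A B :: D)
| G3c_impL : forall A B G D, G3cp G (A :: D) -> G3cp (B :: G) D ->
    G3cp (Imp A B :: G) D
| G3c_impR : forall A B G D, G3cp (A :: G) (B :: D) -> G3cp G (Imp A B :: D)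
| G3c_perm : forall G G' D D', G3cp G D -> Permutation G G' -> Permutation D D' ->
    G3cp G' D'.

Definition cderiv (G : list form) (A : form) : Prop := G3cp G [A].

Inductive NJ (H : form -> Prop) : form -> Prop :=
| NJ_ass : forall A, H A -> NJ H A
| NJ_botE : forall A, NJ H Bot -> NJ H A
| NJ_andI : forall A B, NJ H A -> NJ H B -> NJ H (And A B)
| NJ_andE1 : forall A B, NJ H (And A B) -> NJ H A
| NJ_andE2 : forall A B, NJ H (And A B) -> NJ H B
| NJ_orI1 : forall A B, NJ H A -> NJ H (Or A B)
| NJ_orI2 : forall A B, NJ H B -> NJ H (Or A B)
| NJ_orE : forall A B C, NJ H (Or A B) ->
    NJ (fun X => X = A \/ H X) C -> NJ (fun X => X = B \/ H X) C -> NJ H C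
| NJ_impI : forall A B, NJ (fun X => X = A \/ H X) B -> NJ H (Imp A B)
| NJ_impE : forall A B, NJ H (Imp A B) -> NJ H A -> NJ H B.

Definition PiV (V : nat -> Prop) (X : form) : Prop :=
  exists p, V p /\ X = Or (Var p) (Neg (Var p)).

Definition ideriv (V : nat -> Prop) (G : list form) (A : form) : Prop :=
  NJ (fun X => PiV V X \/ In X G) A.

From Stdlib Require Import List Permutation Classical Arith Bool Lia.
Import ListNotations.

(* Classical validity stands in for derivability in G3cp.  For a variable p of V the
   assumption p \/ ~p splits the proof into the cases p and ~p, in which p is
   intuitionistically equivalent to Top resp. Bot and can be substituted away.  A variable
   that is non-strictly positive in Gamma or negative in A but not in V occurs only
   positively in Gamma and only negatively in A; then every formula of Gamma entails its
   instance with Top for p, and the instance of A entails A, so p can be replaced by Top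
   without any case split.  This leaves sequents without non-strictly positive variables
   on the left and negative variables on the right, for which validity implies
   intuitionistic derivability: apply the right rule for implication and every applicable
   left rule; when none applies, the atoms of Gamma form its least model, the stuck
   implications B -> C of Gamma being satisfied because B is monotone.  The goal is
   monotone as well, so it holds in that least model, which tells which atom or disjunct
   to prove. *)

Notation "H ,, A" := (fun X => X = A \/ H X) (at level 65, left associativity).

Lemma NJ_weaken (H H' : form -> Prop) (A : form) :
  (forall X, H X -> H' X) -> NJ H A -> NJ H' A.
Proof.
  intros HH' D; revert H' HH'.
  induction D; intros H' HH'.
  - now apply NJ_ass, HH'.
  - now apply NJ_botE, IHD.
  - now apply NJ_andI; [apply IHD1 | apply IHD2].
  - now apply (NJ_andE1 _ A B), IHD.
  - now apply (NJ_andE2 _ A B), IHD.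
  - now apply NJ_orI1, IHD.
  - now apply NJ_orI2, IHD.
  - apply (NJ_orE _ A B); [now apply IHD1 | apply IHD2 | apply IHD3];
      intros X [-> | HX]; auto.
  - apply NJ_impI, IHD; intros X [-> | HX]; auto.
  - now apply (NJ_impE _ A B); [apply IHD1 | apply IHD2].
Qed.

Lemma NJ_trans (H H' : form -> Prop) (A : form) :
  (forall X, H X -> NJ H' X) -> NJ H A -> NJ H' A.
Proof.
  intros HH' D; revert H' HH'.
  assert (Hext : forall H H' B, (forall X, H X -> NJ H' X) ->
            forall X, (H ,, B) X -> NJ (H' ,, B) X).
  { intros H0 H0' B HH X [-> | HX]; [now apply NJ_ass; left|].
    apply (NJ_weaken H0'); [now right | now apply HH]. }
  induction D; intros H' HH'.
  - now apply HH'.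
  - now apply NJ_botE, IHD.
  - now apply NJ_andI; [apply IHD1 | apply IHD2].
  - now apply (NJ_andE1 _ A B), IHD.
  - now apply (NJ_andE2 _ A B), IHD.
  - now apply NJ_orI1, IHD.
  - now apply NJ_orI2, IHD.
  - now apply (NJ_orE _ A B); [apply IHD1 | apply IHD2, Hext | apply IHD3, Hext].
  - now apply NJ_impI, IHD, Hext.
  - now apply (NJ_impE _ A B); [apply IHD1 | apply IHD2].
Qed.

Lemma NJ_cut (H H' : form -> Prop) (A B : form) :
  NJ (H ,, A) B -> (forall X, H X -> H' X) -> NJ H' A -> NJ H' B.
Proof.
  intros DB HH' DA; apply (NJ_trans (H ,, A)); [|exact DB].
  intros X [-> | HX]; [exact DA | now apply NJ_ass, HH'].
Qed.

Lemma NJ_hyp (H : form -> Prop) (A : form) : NJ (H ,, A) A.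
Proof. now apply NJ_ass; left. Qed.

Definition Top : form := Neg Bot.

Lemma NJ_Top (H : form -> Prop) : NJ H Top.
Proof. apply NJ_impI, NJ_hyp. Qed.

Fixpoint subst (p : nat) (c : form) (F : form) : form :=
  match F with
  | Var q => if Nat.eqb q p then c else Var q
  | Bot => Bot
  | And B C => And (subst p c B) (subst p c C)
  | Or B C => Or (subst p c B) (subst p c C)
  | Imp B C => Imp (subst p c B) (subst p c C)
  end.

Section NJ_substitution.
Variables (p : nat) (c : form) (H : form -> Prop).

Lemma NJ_subst_polar (F : form) :
  ((In p (vp true F) -> NJ (H ,, Var p) c) ->
   (In p (vp false F) -> NJ (H ,, c) (Var p)) -> NJ (H ,, F) (subst p c F)) /\
  ((In p (vp false F) -> NJ (H ,, Var p) c) ->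
   (In p (vp true F) -> NJ (H ,, c) (Var p)) -> NJ (H ,, subst p c F) F).
Proof.
  induction F as [q | | F1 IH1 F2 IH2 | F1 IH1 F2 IH2 | F1 IH1 F2 IH2]; cbn -[In];
    try setoid_rewrite in_app_iff.
  - destruct (Nat.eqb_spec q p) as [-> | _]; split; intros Hpc Hcp.
    + now apply Hpc; left.
    + now apply Hcp; left.
    + apply NJ_hyp.
    + apply NJ_hyp.
  - split; intros; apply NJ_hyp.
  - split; intros Hpc Hcp; apply NJ_andI.
    + apply (NJ_cut H _ F1); [apply IH1; auto | auto | apply (NJ_andE1 _ F1 F2), NJ_hyp].
    + apply (NJ_cut H _ F2); [apply IH2; auto | auto | apply (NJ_andE2 _ F1 F2), NJ_hyp].
    + apply (NJ_cut H _ (subst p c F1)); [apply IH1; auto | auto |].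
      apply (NJ_andE1 _ _ (subst p c F2)), NJ_hyp.
    + apply (NJ_cut H _ (subst p c F2)); [apply IH2; auto | auto |].
      apply (NJ_andE2 _ (subst p c F1)), NJ_hyp.
  - split; intros Hpc Hcp; (eapply NJ_orE; [apply NJ_hyp | |]).
    + apply NJ_orI1, (NJ_cut H _ F1); [apply IH1; auto | auto | apply NJ_hyp].
    + apply NJ_orI2, (NJ_cut H _ F2); [apply IH2; auto | auto | apply NJ_hyp].
    + apply NJ_orI1, (NJ_cut H _ (subst p c F1));
        [apply IH1; auto | auto | apply NJ_hyp].
    + apply NJ_orI2, (NJ_cut H _ (subst p c F2));
        [apply IH2; auto | auto | apply NJ_hyp].
  - split; intros Hpc Hcp; apply NJ_impI.
    + apply (NJ_cut H _ F2); [apply IH2; auto | auto |].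
      apply (NJ_impE _ F1); [apply NJ_ass; auto |].
      apply (NJ_cut H _ (subst p c F1)); [apply IH1; auto | auto | apply NJ_hyp].
    + apply (NJ_cut H _ (subst p c F2)); [apply IH2; auto | auto |].
      apply (NJ_impE _ (subst p c F1)); [apply NJ_ass; auto |].
      apply (NJ_cut H _ F1); [apply IH1; auto | auto | apply NJ_hyp].
Qed.
End NJ_substitution.

Lemma NJ_subst_iff (p : nat) (c : form) (H : form -> Prop) (F : form) :
  NJ (H ,, Var p) c -> NJ (H ,, c) (Var p) -> NJ H F <-> NJ H (subst p c F).
Proof.
  intros Hpc Hcp; destruct (NJ_subst_polar p c H F) as [Hto Hfrom].
  split; intros D; [apply (NJ_cut H H F) | apply (NJ_cut H H (subst p c F))]; auto.
Qed.

Lemma NJ_subst_Top_pos (p : nat) (H : form -> Prop) (F : form) :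
  ~ In p (Vneg F) -> NJ H F -> NJ H (subst p Top F).
Proof.
  intros Hp D; apply (NJ_cut H H F); auto.
  apply (NJ_subst_polar p Top H F); [intros; apply NJ_Top | contradiction].
Qed.

Lemma NJ_subst_Top_neg (p : nat) (H : form -> Prop) (F : form) :
  ~ In p (Vpos F) -> NJ H (subst p Top F) -> NJ H F.
Proof.
  intros Hp D; apply (NJ_cut H H (subst p Top F)); auto.
  apply (NJ_subst_polar p Top H F); [intros; apply NJ_Top | contradiction].
Qed.

Fixpoint eval (v : nat -> bool) (F : form) : bool :=
  match F with
  | Var p => v p
  | Bot => false
  | And B C => eval v B && eval v C
  | Or B C => eval v B || eval v C
  | Imp B C => implb (eval v B) (eval v C)
  end.

Definition models (v : nat -> bool) (G : list form) : Prop :=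
  forall X, In X G -> eval v X = true.

Definition valid (G : list form) (A : form) : Prop :=
  forall v, models v G -> eval v A = true.

Lemma models_cons (v : nat -> bool) (X : form) (G : list form) :
  models v (X :: G) <-> eval v X = true /\ models v G.
Proof.
  unfold models; simpl; split; [auto|].
  now intros [HX HG] Y [<- | HY]; [|apply HG].
Qed.

Lemma G3cp_sound (G D : list form) : G3cp G D ->
  forall v, models v G -> exists X, In X D /\ eval v X = true.
Proof.
  induction 1 as [p G D | G D | A B G D _ IH | A B G D _ IH1 _ IH2 | A B G D _ IH1 _ IH2
                 | A B G D _ IH | A B G D _ IH1 _ IH2 | A B G D _ IH
                 | G G' D D' _ IH HG HD];
    intros v Hv; rewrite ?models_cons in Hv; simpl in Hv.
  - exists (Var p); simpl; tauto.
  - easy.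
  - destruct Hv as [Hv HG]; apply andb_true_iff in Hv.
    apply IH; rewrite !models_cons; tauto.
  - destruct (IH1 v Hv) as [X [[<- | HX] E1]]; [|exists X; simpl; tauto].
    destruct (IH2 v Hv) as [Y [[<- | HY] E2]]; [|exists Y; simpl; tauto].
    exists (And A B); simpl; rewrite E1, E2; tauto.
  - destruct Hv as [Hv HG]; apply orb_true_iff in Hv as [Hv | Hv];
      [apply IH1 | apply IH2]; now apply models_cons.
  - destruct (IH v Hv) as [X [[<- | [<- | HX]] E]].
    + exists (Or A B); simpl; rewrite E; tauto.
    + exists (Or A B); simpl; rewrite E, orb_true_r; tauto.
    + exists X; simpl; tauto.
  - destruct Hv as [Hv HG]; destruct (IH1 v HG) as [X [[<- | HX] E]];
      [|exists X; simpl; tauto].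
    rewrite E in Hv; apply IH2, models_cons; auto.
  - destruct (eval v A) eqn:EA.
    + destruct (IH v) as [X [[<- | HX] E]]; [now apply models_cons| |].
      * exists (Imp A B); simpl; rewrite E, implb_true_r; tauto.
      * exists X; simpl; tauto.
    + exists (Imp A B); simpl; rewrite EA; tauto.
  - destruct (IH v) as [X [HX E]].
    + intros X HX; apply Hv, (Permutation_in _ HG HX).
    + exists X; split; [apply (Permutation_in _ HD HX) | exact E].
Qed.

Lemma cderiv_valid (G : list form) (A : form) : cderiv G A -> valid G A.
Proof.
  intros D v Hv; destruct (G3cp_sound G [A] D v Hv) as [X [[<- | []] E]]; exact E.
Qed.

Lemma eval_subst (v : nat -> bool) (p : nat) (c F : form) :
  eval v (subst p c F) = eval (fun q => if Nat.eqb q p then eval v c else v q) F.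
Proof.
  induction F; simpl; try congruence.
  now destruct (Nat.eqb n p).
Qed.

Lemma valid_subst (p : nat) (c : form) (G : list form) (A : form) :
  valid G A -> valid (map (subst p c) G) (subst p c A).
Proof.
  intros HA v Hv; rewrite eval_subst; apply HA.
  intros X HX; rewrite <- eval_subst; apply Hv, in_map, HX.
Qed.

Lemma eval_monotone (v w : nat -> bool) (F : form) :
  (forall q, v q = true -> w q = true) ->
  (Vneg F = [] -> eval v F = true -> eval w F = true) /\
  (Vpos F = [] -> eval w F = true -> eval v F = true).
Proof.
  intros Hvw; unfold Vneg, Vpos.
  induction F as [q | | F1 IH1 F2 IH2 | F1 IH1 F2 IH2 | F1 IH1 F2 IH2]; simpl;
    try (split; intros Hn; apply app_eq_nil in Hn as [Hn1 Hn2]); auto.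
  - split; [auto | discriminate].
  - rewrite !andb_true_iff; tauto.
  - rewrite !andb_true_iff; tauto.
  - rewrite !orb_true_iff; tauto.
  - rewrite !orb_true_iff; tauto.
  - destruct (eval v F1), (eval w F1); simpl; intuition congruence.
  - destruct (eval v F1), (eval w F1); simpl; intuition congruence.
Qed.

Definition closed (c : form) : Prop := forall b, vp b c = [].

Lemma closed_Top : closed Top. Proof. now intros []. Qed.
Lemma closed_Bot : closed Bot. Proof. now intros []. Qed.

Lemma incl_Vns_Vpos (F : form) : incl (Vns F) (Vpos F).
Proof.
  unfold Vpos; induction F; simpl;
    auto using incl_nil_l, incl_app_app, incl_refl.
Qed.

Section Occurrences_after_substitution.
Variables (p : nat) (c : form).
Hypothesis Hc : closed c.

Lemma vp_subst (b : bool) (F : form) (q : nat) :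
  In q (vp b (subst p c F)) -> In q (vp b F) /\ q <> p.
Proof.
  revert b; induction F as [r | | F1 IH1 F2 IH2 | F1 IH1 F2 IH2 | F1 IH1 F2 IH2];
    intros b; simpl;
    try (rewrite !in_app_iff; intros [Hq | Hq]; [apply IH1 in Hq | apply IH2 in Hq]; tauto).
  - destruct (Nat.eqb_spec r p) as [-> | Hrp]; [now rewrite Hc|].
    destruct b; simpl; [|tauto]. intros [<- | []]; tauto.
  - tauto.
Qed.

Lemma Vns_subst (F : form) (q : nat) :
  In q (Vns (subst p c F)) -> In q (Vns F) /\ q <> p.
Proof.
  induction F as [r | | F1 IH1 F2 IH2 | F1 IH1 F2 IH2 | F1 IH1 F2 IH2]; simpl;
    try (rewrite !in_app_iff; intros [Hq | Hq];
         [apply IH1 in Hq || apply vp_subst in Hq | apply IH2 in Hq]; unfold Vneg; tauto).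
  - destruct (Nat.eqb r p); [|tauto].
    intros Hq; apply incl_Vns_Vpos in Hq; unfold Vpos in Hq; now rewrite Hc in Hq.
  - tauto.
Qed.

Lemma flat_map_subst (f : form -> list nat) (G : list form) (q : nat) :
  (forall F, In q (f (subst p c F)) -> In q (f F) /\ q <> p) ->
  In q (flat_map f (map (subst p c) G)) -> In q (flat_map f G) /\ q <> p.
Proof.
  intros Hf Hq; rewrite flat_map_concat_map, map_map, <- flat_map_concat_map in Hq.
  apply in_flat_map in Hq as [F [HF Hq]]; apply Hf in Hq as [Hq Hqp].
  split; [apply in_flat_map; eauto | exact Hqp].
Qed.

Lemma VnegL_subst (G : list form) (q : nat) :
  In q (VnegL (map (subst p c) G)) -> In q (VnegL G) /\ q <> p.
Proof. apply flat_map_subst; intros F; apply vp_subst. Qed.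

Lemma VnsL_subst (G : list form) (q : nat) :
  In q (VnsL (map (subst p c) G)) -> In q (VnsL G) /\ q <> p.
Proof. apply flat_map_subst; intros F; apply Vns_subst. Qed.

End Occurrences_after_substitution.

Lemma ideriv_map (W : nat -> Prop) (G : list form) (A : form) (f : form -> form)
    (H : form -> Prop) :
  (forall X, PiV W X -> H X) -> (forall Y, In Y G -> NJ H (f Y)) ->
  ideriv W (map f G) A -> NJ H A.
Proof.
  intros HW HG; apply NJ_trans; intros X [HX | HX]; [now apply NJ_ass, HW|].
  apply in_map_iff in HX as [Y [<- HY]]; now apply HG.
Qed.

Lemma NJ_of_ideriv_subst (W : nat -> Prop) (G : list form) (A : form) (p : nat)
    (c : form) (H : form -> Prop) :
  (forall X, PiV W X \/ In X G -> H X) -> NJ (H ,, Var p) c -> NJ (H ,, c) (Var p) ->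
  ideriv W (map (subst p c) G) (subst p c A) -> NJ H A.
Proof.
  intros HH Hpc Hcp D; apply (NJ_subst_iff p c H A Hpc Hcp).
  apply (ideriv_map W G _ (subst p c)); [auto | | exact D].
  intros Y HY; apply (NJ_subst_iff p c H Y Hpc Hcp), NJ_ass; auto.
Qed.

Lemma ideriv_by_cases (W : nat -> Prop) (G : list form) (A : form) (p : nat) :
  W p -> ideriv W (map (subst p Top) G) (subst p Top A) ->
  ideriv W (map (subst p Bot) G) (subst p Bot A) -> ideriv W G A.
Proof.
  intros Wp DT DB; apply (NJ_orE _ (Var p) (Neg (Var p))).
  - apply NJ_ass; left; now exists p.
  - apply (NJ_of_ideriv_subst W G A p Top); auto using NJ_Top.
    apply NJ_ass; auto.
  - apply (NJ_of_ideriv_subst W G A p Bot); auto.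
    + apply (NJ_impE _ (Var p)); apply NJ_ass; auto.
    + apply NJ_botE, NJ_hyp.
Qed.

Lemma ideriv_subst_Top (W : nat -> Prop) (G : list form) (A : form) (p : nat) :
  ~ In p (VnegL G) -> ~ In p (Vpos A) ->
  ideriv W (map (subst p Top) G) (subst p Top A) -> ideriv W G A.
Proof.
  intros HG HA D; apply (NJ_subst_Top_neg p); [exact HA|].
  apply (ideriv_map W G _ (subst p Top)); [auto | | exact D].
  intros Y HY; apply NJ_subst_Top_pos; [|now apply NJ_ass; right].
  intros Hp; apply HG, in_flat_map; eauto.
Qed.

Fixpoint size (F : form) : nat :=
  match F with
  | Var _ | Bot => 1
  | And B C | Or B C | Imp B C => 1 + size B + size C
  end.

Definition weight (G : list form) (A : form) : nat := list_sum (map size G) + size A.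

Lemma weight_split (G1 G2 : list form) (X A : form) :
  weight (G1 ++ X :: G2) A = size X + weight (G1 ++ G2) A.
Proof. unfold weight; rewrite !map_app, !list_sum_app; simpl; lia. Qed.

Lemma VnsL_split (G1 G2 : list form) (X : form) :
  VnsL (G1 ++ X :: G2) = [] -> Vns X = [] /\ VnsL (G1 ++ G2) = [].
Proof.
  unfold VnsL; rewrite !flat_map_app; simpl.
  intros E; apply app_eq_nil in E as [E1 E]; apply app_eq_nil in E as [E2 E3].
  now rewrite E1, E3.
Qed.

Lemma models_split (v : nat -> bool) (G1 G2 : list form) (X : form) :
  models v (X :: G1 ++ G2) -> models v (G1 ++ X :: G2).
Proof.
  intros Hv Y HY; apply Hv; apply in_elt_inv in HY as [-> | HY]; simpl; auto.
Qed.

(* A left rule on [X] reduces [X, G => A]; an implication [B -> C] is only used once [B]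
   follows from the rest [G] alone, so that the premise [G => B] is smaller. *)
Definition left_applicable (G : list form) (X : form) : Prop :=
  match X with
  | Var _ => False
  | Imp B _ => valid G B
  | _ => True
  end.

Definition NJ_complete_at (G : list form) (A : form) : Prop :=
  valid G A -> VnsL G = [] -> Vneg A = [] -> NJ (fun X => In X G) A.

Definition form_eq_dec : forall X Y : form, {X = Y} + {X <> Y}.
Proof. decide equality; apply Nat.eq_dec. Defined.

Definition atoms (G : list form) (q : nat) : bool :=
  if in_dec form_eq_dec (Var q) G then true else false.

Lemma atoms_spec (G : list form) (q : nat) : atoms G q = true <-> In (Var q) G.
Proof. unfold atoms; destruct (in_dec form_eq_dec (Var q) G); intuition discriminate. Qed.

Lemma valid_of_atoms (G G' : list form) (B : form) :
  (forall q, In (Var q) G -> In (Var q) G') -> Vneg B = [] ->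
  eval (atoms G) B = true -> valid G' B.
Proof.
  intros HGG' HB EB w Hw; apply (eval_monotone (atoms G) w B); auto.
  intros q Hq; apply atoms_spec, HGG' in Hq; exact (Hw _ Hq).
Qed.

Definition stuck (G : list form) : Prop :=
  forall G1 X G2, G = G1 ++ X :: G2 -> ~ left_applicable (G1 ++ G2) X.

Lemma models_atoms (G : list form) : VnsL G = [] -> stuck G -> models (atoms G) G.
Proof.
  intros HG Hst Y HY; destruct (in_split Y G HY) as (G1 & G2 & ->).
  apply VnsL_split in HG as [HY_ns _].
  specialize (Hst G1 Y G2 eq_refl).
  destruct Y as [q | | B C | B C | B C]; simpl in *; try tauto.
  - now apply atoms_spec.
  - apply app_eq_nil in HY_ns as [HB _].
    destruct (eval (atoms (G1 ++ Imp B C :: G2)) B) eqn:EB; [|reflexivity].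
    exfalso; apply Hst; refine (valid_of_atoms _ _ _ _ HB EB).
    intros q Hq; now apply in_elt_inv in Hq as [Hq | Hq].
Qed.

Section Strict_completeness.
Variable n : nat.
Hypothesis IH : forall G A, weight G A < n -> NJ_complete_at G A.

Lemma NJ_complete_left (G1 G2 : list form) (X A : form) :
  weight (G1 ++ X :: G2) A <= n -> left_applicable (G1 ++ G2) X ->
  NJ_complete_at (G1 ++ X :: G2) A.
Proof.
  intros Hw HX Hv HG HA; apply VnsL_split in HG as [HXns HG].
  rewrite weight_split in Hw; unfold weight in Hw.
  assert (Hsub : incl (G1 ++ G2) (G1 ++ X :: G2))
    by apply (incl_app_app (incl_refl G1) (incl_tl X (incl_refl G2))).
  assert (Hrest : forall Y, In Y (G1 ++ G2) -> NJ (fun Y => In Y (G1 ++ X :: G2)) Y)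
    by (intros Y HY; apply NJ_ass, Hsub, HY).
  assert (HX_in : NJ (fun Y => In Y (G1 ++ X :: G2)) X) by apply NJ_ass, in_elt.
  destruct X as [q | | B C | B C | B C]; simpl in HX, HXns, Hw.
  - contradiction.
  - now apply NJ_botE.
  - apply app_eq_nil in HXns as [HB HC].
    assert (D : NJ (fun Y => In Y (B :: C :: G1 ++ G2)) A).
    { apply IH; [unfold weight; simpl; lia | | simpl; now rewrite HB, HC, HG | exact HA].
      intros v Hv'; apply Hv, models_split; rewrite !models_cons in *; simpl.
      rewrite andb_true_iff; tauto. }
    refine (NJ_trans _ _ _ _ D); intros Y HY.
    destruct HY as [<- | [<- | HY]]; [..| now apply Hrest].
    + now apply (NJ_andE1 _ B C).
    + now apply (NJ_andE2 _ B C).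
  - assert (Hbranch : forall D, Vns D = [] -> size D < size (Or B C) ->
              (forall v, eval v D = true -> eval v (Or B C) = true) ->
              NJ ((fun Y => In Y (G1 ++ Or B C :: G2)) ,, D) A).
    { intros D HD Hsize HDX.
      assert (DA : NJ (fun Y => In Y (D :: G1 ++ G2)) A).
      { apply IH; [unfold weight; simpl in *; lia | | simpl; now rewrite HD, HG | exact HA].
        intros v Hv'; apply Hv, models_split; rewrite !models_cons in *; intuition. }
      refine (NJ_weaken _ _ _ _ DA); intros Y [<- | HY]; [now left | right; now apply Hsub]. }
    apply app_eq_nil in HXns as [HB HC].
    apply (NJ_orE _ B C _ HX_in); apply Hbranch; auto; simpl; try lia;
      intros v ->; [|apply orb_true_r]; reflexivity.
  - apply app_eq_nil in HXns as [HB HC].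
    assert (DB : NJ (fun Y => In Y (G1 ++ G2)) B).
    { apply IH; [unfold weight; lia | assumption..]. }
    assert (DA : NJ (fun Y => In Y (C :: G1 ++ G2)) A).
    { apply IH; [unfold weight; simpl; lia | | simpl; now rewrite HC, HG | exact HA].
      intros v Hv'; apply Hv, models_split; rewrite !models_cons in *; simpl.
      destruct (eval v B); simpl; tauto. }
    refine (NJ_trans _ _ _ _ DA); intros Y HY.
    destruct HY as [<- | HY]; [|now apply Hrest].
    apply (NJ_impE _ B C HX_in), (NJ_trans _ _ _ Hrest DB).
Qed.

Lemma NJ_complete_imp (G : list form) (B C : form) :
  weight G (Imp B C) <= n -> NJ_complete_at G (Imp B C).
Proof.
  intros Hw Hv HG HBC; simpl in HBC; apply app_eq_nil in HBC as [HB HC].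
  apply NJ_impI; refine (NJ_weaken _ _ _ _ (IH (B :: G) C _ _ _ HC)).
  - intros Y [<- | HY]; auto.
  - unfold weight in *; simpl in *; lia.
  - intros v Hv'; apply models_cons in Hv' as [EB HvG].
    specialize (Hv v HvG); simpl in Hv; now rewrite EB in Hv.
  - simpl; rewrite HG, app_nil_r; apply incl_l_nil.
    rewrite <- HB; apply incl_Vns_Vpos.
Qed.

Lemma NJ_complete_stuck (G : list form) (A : form) :
  weight G A <= n -> (forall B C, A <> Imp B C) -> stuck G -> NJ_complete_at G A.
Proof.
  intros Hw HA_imp Hst Hv HG HA.
  assert (EA : eval (atoms G) A = true) by now apply Hv, models_atoms.
  assert (Hsmaller : forall B, Vneg B = [] -> eval (atoms G) B = true ->
                       size B < size A -> NJ (fun Y => In Y G) B).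
  { intros B HB EB Hsize; apply IH; auto; [unfold weight in *; lia|].
    apply (valid_of_atoms G G B); auto. }
  destruct A as [q | | B C | B C | B C]; simpl in EA, HA.
  - now apply NJ_ass, atoms_spec.
  - discriminate.
  - apply app_eq_nil in HA as [HB HC]; apply andb_true_iff in EA as [EB EC].
    apply NJ_andI; apply Hsmaller; simpl; auto; lia.
  - apply app_eq_nil in HA as [HB HC]; apply orb_true_iff in EA as [EB | EC].
    + apply NJ_orI1, Hsmaller; simpl; auto; lia.
    + apply NJ_orI2, Hsmaller; simpl; auto; lia.
  - now destruct (HA_imp B C).
Qed.

End Strict_completeness.

Lemma NJ_complete (G : list form) (A : form) : NJ_complete_at G A.
Proof.
  revert G A; enough (Hn : forall n G A, weight G A < n -> NJ_complete_at G A)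
    by (intros G A; apply (Hn (S (weight G A))); lia).
  induction n as [|n IHn]; intros G A Hw; [lia|].
  assert (Hw' : weight G A <= n) by lia.
  destruct (classic (exists B C, A = Imp B C)) as [(B & C & ->) | HA_imp].
  { now apply (NJ_complete_imp n). }
  destruct (classic (exists G1 X G2, G = G1 ++ X :: G2 /\ left_applicable (G1 ++ G2) X))
    as [(G1 & X & G2 & -> & HX) | Hst].
  - now apply (NJ_complete_left n).
  - apply (NJ_complete_stuck n); auto.
    + intros B C ->; apply HA_imp; eauto.
    + intros G1 X G2 -> HX; apply Hst; eauto.
Qed.

Definition critical (G : list form) (A : form) (q : nat) : Prop :=
  (In q (VnegL G) \/ In q (Vpos A)) /\ (In q (VnsL G) \/ In q (Vneg A)).

Section Variables_after_substitution.
Variables (p : nat) (c : form) (G : list form) (A : form).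
Hypothesis Hc : closed c.

Lemma critical_subst (q : nat) :
  critical (map (subst p c) G) (subst p c A) q -> critical G A q /\ q <> p.
Proof.
  intros [[H1 | H1] [H2 | H2]];
    [ apply (VnegL_subst p c Hc) in H1 | apply (VnegL_subst p c Hc) in H1
    | apply (vp_subst p c Hc) in H1 | apply (vp_subst p c Hc) in H1 ];
    [ apply (VnsL_subst p c Hc) in H2 | apply (vp_subst p c Hc) in H2
    | apply (VnsL_subst p c Hc) in H2 | apply (vp_subst p c Hc) in H2 ];
    unfold critical; tauto.
Qed.

Lemma strict_vars_subst (q : nat) :
  In q (VnsL (map (subst p c) G) ++ Vneg (subst p c A)) ->
  In q (VnsL G ++ Vneg A) /\ q <> p.
Proof.
  rewrite !in_app_iff; intros [Hq | Hq];
    [apply (VnsL_subst p c Hc) in Hq | apply (vp_subst p c Hc) in Hq]; tauto.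
Qed.

End Variables_after_substitution.

Lemma ideriv_of_valid (L : list nat) (W : nat -> Prop) (G : list form) (A : form) :
  valid G A -> incl (VnsL G ++ Vneg A) L -> (forall q, critical G A q -> W q) ->
  ideriv W G A.
Proof.
  revert G A; induction L as [|p L IHL]; intros G A Hv HL HW.
  { apply incl_l_nil, app_eq_nil in HL as [HG HA].
    apply (NJ_weaken (fun X => In X G)); [auto | now apply NJ_complete]. }
  assert (Hsubst : forall c, closed c -> ideriv W (map (subst p c) G) (subst p c A)).
  { intros c Hc; apply IHL; [now apply valid_subst | |].
    - intros q Hq; apply (strict_vars_subst p c G A Hc) in Hq as [Hq Hqp].
      destruct (HL q Hq); [congruence | assumption].
    - intros q Hq; apply HW, (critical_subst p c G A Hc q Hq). }
  destruct (classic (critical G A p)) as [Hp | Hp].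
  - apply (ideriv_by_cases W G A p (HW p Hp)); apply Hsubst; auto using closed_Top, closed_Bot.
  - destruct (classic (In p (VnegL G) \/ In p (Vpos A))) as [Hocc | Hocc].
    + apply IHL; auto; intros q Hq.
      destruct (HL q Hq) as [-> | ]; [|assumption].
      exfalso; apply Hp; split; [exact Hocc | now apply in_app_iff].
    + apply (ideriv_subst_Top W G A p); [tauto | tauto | apply Hsubst, closed_Top].
Qed.

Theorem mainTheorem1 (G : list form) (A : form) :
  cderiv G A ->
  ideriv (fun p => (In p (VnegL G) \/ In p (Vpos A)) /\
                   (In p (VnsL G) \/ In p (Vneg A))) G A.
Proof.
  intros D; apply (ideriv_of_valid (VnsL G ++ Vneg A)).
  - now apply cderiv_valid.
  - apply incl_refl.
  - now intros q Hq.
Qed.
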